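(* Every $P$-faithful real quadratic form $f$ on $\mathbb R^n$ is antimonotonous.
   Context: $P_n=\{x\in\mathbb R^n:x_i>0,\ \sum x_i=1\}$, $\overline P_n=\{x: x_i\ge0,\ \sum x_i=1\}$. A continuous $f$ is $P$-faithful if $\min_{\overline P_n}f>0$ and this minimum is not attained on $\overline P_n\setminus P_n$. $H_n=\{x:\sum x_i=0\}$; $C(f)$ is the set of $h\in H_n\setminus\{0\}$ such that either $\partial f/\partial x_i(h)\le 0$ for all $i$ or $\partial f/\partial x_i(h)\ge0$ for all $i$. $f$ is antimonotonous if $C(f)=\varnothing$. *)

From HB Require Import structures.
From mathcomp Require Import all_boot all_order all_algebra.
From mathcomp Require Import all_classical all_reals all_analysis.
Set Implicit Arguments. Unset Strict Implicit. Unset Printing Implicit Defensive.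
Import Order.TTheory GRing.Theory Num.Theory.
Import numFieldNormedType.Exports.
Local Open Scope ring_scope.

Definition qform (R : realType) (n : nat) (A : 'M[R]_n) : 'rV[R]_n -> R :=
  fun x => \sum_(i < n) \sum_(j < n) A i j * x 0 i * x 0 j.

Definition Psimplex (R : realType) (n : nat) (x : 'rV[R]_n) : Prop :=
  (forall i, 0 < x 0 i) /\ \sum_(i < n) x 0 i = 1.

Definition Pbar (R : realType) (n : nat) (x : 'rV[R]_n) : Prop :=
  (forall i, 0 <= x 0 i) /\ \sum_(i < n) x 0 i = 1.

Definition P_faithful (R : realType) (n : nat) (f : 'rV[R]_n -> R) : Prop :=
  (exists x0, Pbar x0 /\ (forall y, Pbar y -> f x0 <= f y) /\ 0 < f x0) /\
  (forall x, Pbar x -> (forall y, Pbar y -> f x <= f y) -> Psimplex x).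

Definition Hn (R : realType) (n : nat) (h : 'rV[R]_n) : Prop :=
  \sum_(i < n) h 0 i = 0.

Definition partial (R : realType) (n : nat) (f : 'rV[R]_n -> R) (i : 'I_n)
  (h : 'rV[R]_n) : R := 'D_(delta_mx 0 i) f h.

Definition Cset (R : realType) (n : nat) (f : 'rV[R]_n -> R) (h : 'rV[R]_n) : Prop :=
  Hn h /\ h <> 0 /\
  ((forall i, partial f i h <= 0) \/ (forall i, 0 <= partial f i h)).

Definition antimonotonous (R : realType) (n : nat) (f : 'rV[R]_n -> R) : Prop :=
  forall h, ~ Cset f h.

From mathcomp Require Import all_boot all_order all_algebra.
From mathcomp Require Import all_classical all_reals all_analysis.
From mathcomp Require Import ring lra.
Set Implicit Arguments. Unset Strict Implicit. Unset Printing Implicit Defensive.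
Import Order.TTheory GRing.Theory Num.Theory.
Import numFieldNormedType.Exports.
Local Open Scope ring_scope.
Local Open Scope classical_set_scope.

(* Let x be a minimiser of f = qform A on the closed simplex; by P-faithfulness
   it is interior.  If some h in H_n \ {0} had a nonnegative gradient g(h), then
   t |-> f (x + t h) = f x + t <x, g(h)> + t^2 f h has a local minimum at t = 0,
   so <x, g(h)> = 0; since x > 0 and g(h) >= 0 this forces g(h) = 0, whence
   f h = <h, g(h)> / 2 = 0.  So f is constant on the line x + R h, which leaves
   the simplex through a boundary point; that point is again a minimiser,
   contradicting P-faithfulness.  A nonpositive gradient is the case of -h. *)

Section RealQuadratic.
Variable R : realType.

Lemma quadratic_ge0_near0_slope_eq0 (a b : R) :
  (\forall t \near 0, 0 <= t * a + t ^+ 2 * b) -> a = 0.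
Proof.
move=> /nbhs_ballP[s s_gt0 sub_s].
have {}sub_s t : `|t| < s -> 0 <= t * a + t ^+ 2 * b.
  by move=> t_lt; apply: sub_s; rewrite /ball /= sub0r normrN.
wlog a_ge0 : a sub_s / 0 <= a.
  move=> wlog_a; have [|a_lt0] := leP 0 a; first exact: wlog_a.
  apply/eqP; rewrite -oppr_eq0; apply/eqP; apply: wlog_a; last by rewrite oppr_ge0 ltW.
  by move=> t t_lt; rewrite mulrN -mulNr -sqrrN; apply: sub_s; rewrite normrN.
apply/eqP; rewrite eq_le a_ge0 andbT leNgt; apply/negP => a_gt0.
set e := Num.min (s / 2) (a / (`|b| + 1)).
have e_gt0 : 0 < e by rewrite lt_min !divr_gt0 // ltr_pwDr.
have e_lt_s : e < s by rewrite gt_min ltr_pdivrMr // ltr_pMr // ltr1n.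
have e_le : e * (`|b| + 1) <= a by rewrite -ler_pdivlMr ?ltr_pwDr // ge_min lexx orbT.
have := sub_s (- e); rewrite normrN gtr0_norm // => /(_ e_lt_s).
have := ler_norm b; nra.
Qed.

Variable V : normedModType R.

Lemma derive_quadratic_line (f : V -> R) (x v : V) (c d : R) :
  (forall t, f (x + t *: v) = f x + t * c + t ^+ 2 * d) -> 'D_v f x = c.
Proof.
move=> f_line; rewrite /derive; apply: cvg_lim => //.
have lin_cvg : (fun t : R => c + t * d) @ 0^' --> c.
  rewrite -[X in _ --> X]addr0 -[X in _ --> _ + X](mul0r d).
  apply: cvg_within_filter; apply: cvgD; first exact: cvg_cst.
  by apply: cvgMr_tmp; exact: cvg_id.
apply: cvg_trans lin_cvg; apply: near_eq_cvg; near=> t.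
have t_neq0 : t != 0 by near: t; exact: nbhs_dnbhs_neq.
rewrite /= [_ + x]addrC f_line.
have -> : forall y : R, t^-1 *: y = t^-1 * y by [].
by field.
Unshelve. all: end_near.
Qed.

End RealQuadratic.

Section Simplex.
Variables (R : realType) (n : nat).
Implicit Types x h : 'rV[R]_n.

Lemma HnN h : Hn h -> Hn (- h).
Proof.
by rewrite /Hn => h_sum; under eq_bigr do rewrite mxE; rewrite sumrN h_sum oppr0.
Qed.

Lemma Hn_neg_coord h : Hn h -> h <> 0 -> exists i, h 0 i < 0.
Proof.
move=> h_sum h_neq0; apply: contra_notP h_neq0 => no_neg.
have h_ge0 i : 0 <= h 0 i by rewrite leNgt; apply/negP => h_lt0; apply: no_neg; exists i.
by apply/rowP => i; rewrite mxE (psumr_eq0P (fun i _ => h_ge0 i) h_sum).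
Qed.

Lemma Pbar_line x h t : \sum_(i < n) x 0 i = 1 -> Hn h ->
  (forall i, 0 <= (x + t *: h) 0 i) -> Pbar (x + t *: h).
Proof.
move=> x_sum h_sum coord_ge0; split => //.
under eq_bigr do rewrite !mxE.
by rewrite big_split /= -mulr_sumr x_sum h_sum mulr0 addr0.
Qed.

Lemma Psimplex_line_near x h : Psimplex x -> Hn h ->
  \forall t \near 0, Pbar (x + t *: h).
Proof.
move=> [x_gt0 x_sum] h_sum.
have coord_near i : \forall t \near 0, 0 < (x + t *: h) 0 i.
  have coord_cvg : (fun t : R => (x + t *: h) 0 i) @ 0 --> x 0 i.
    rewrite -[X in _ --> X]addr0 -[X in _ --> _ + X](mul0r (h 0 i)).
    under eq_fun do rewrite !mxE.
    by apply: cvgD; [exact: cvg_cst | apply: cvgMr_tmp; exact: cvg_id].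
  exact: cvgr_gt coord_cvg _ (x_gt0 i).
have : \forall t \near 0, forall i, 0 < (x + t *: h) 0 i.
  exact: (filter_forall _ coord_near).
apply: filterS => t coord_gt0.
by apply: Pbar_line => // i; apply: ltW.
Qed.

Lemma Psimplex_line_exit x h : Psimplex x -> Hn h -> h <> 0 ->
  exists t, Pbar (x + t *: h) /\ ~ Psimplex (x + t *: h).
Proof.
move=> [x_gt0 x_sum] h_sum h_neq0.
have [j hj_lt0] := Hn_neg_coord h_sum h_neq0.
pose ratio i := x 0 i / - h 0 i.
case: (@arg_minP _ R _ j (fun i => h 0 i < 0) ratio hj_lt0) => i0 /= hi0_lt0 ratio_min.
have t_ge0 : 0 <= ratio i0 by rewrite divr_ge0 ?oppr_ge0 ?ltW.
exists (ratio i0); split.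
  apply: Pbar_line => // i; rewrite !mxE.
  have [hi_lt0|hi_ge0] := ltP (h 0 i) 0; last first.
    by apply: addr_ge0; [exact: ltW | exact: mulr_ge0].
  have := ratio_min i hi_lt0; rewrite /ratio ler_pdivlMr ?oppr_gt0 //; nra.
move=> [coord_gt0 _]; have := coord_gt0 i0; rewrite !mxE /ratio.
by rewrite divrN mulNr divfK ?lt_eqF // subrr ltxx.
Qed.

Lemma interior_min_slope_eq0 (f : 'rV[R]_n -> R) x h (a b : R) :
  Psimplex x -> (forall y, Pbar y -> f x <= f y) -> Hn h ->
  (forall t, f (x + t *: h) = f x + t * a + t ^+ 2 * b) -> a = 0.
Proof.
move=> x_int x_min h_sum f_line; apply: (quadratic_ge0_near0_slope_eq0 (b := b)).
have := Psimplex_line_near x_int h_sum; apply: filterS => t Py.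
by have := x_min _ Py; rewrite f_line -addrA lerDl.
Qed.

Lemma P_faithful_line_nonconst (f : 'rV[R]_n -> R) x h :
  P_faithful f -> Pbar x -> (forall y, Pbar y -> f x <= f y) ->
  Hn h -> h <> 0 -> ~ (forall t, f (x + t *: h) = f x).
Proof.
move=> [_ min_int] Px x_min h_sum h_neq0 f_const.
have [t [Py y_bd]] := Psimplex_line_exit (min_int x Px x_min) h_sum h_neq0.
by apply/y_bd/min_int => // z Pz; rewrite f_const; apply: x_min.
Qed.

End Simplex.

Section QuadraticForm.
Variables (R : realType) (n : nat) (A : 'M[R]_n).
Implicit Types x y h : 'rV[R]_n.

Definition qgrad x : 'rV[R]_n := \row_i \sum_(j < n) (A i j + A j i) * x 0 j.

Definition qpolar x y : R :=
  \sum_(i < n) \sum_(j < n) A i j * (x 0 i * y 0 j + y 0 i * x 0 j).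

Lemma qpolarC x y : qpolar x y = qpolar y x.
Proof. by apply: eq_bigr => i _; apply: eq_bigr => j _; rewrite addrC. Qed.

Lemma qpolarE x y : qpolar x y = \sum_(i < n) x 0 i * qgrad y 0 i.
Proof.
transitivity (\sum_(i < n) \sum_(j < n) A i j * x 0 i * y 0 j
            + \sum_(i < n) \sum_(j < n) A j i * x 0 i * y 0 j).
  rewrite [X in _ = _ + X]exchange_big /= -big_split; apply: eq_bigr => i _ /=.
  by rewrite -big_split; apply: eq_bigr => j _ /=; ring.
rewrite -big_split; apply: eq_bigr => i _ /=.
by rewrite mxE mulr_sumr -big_split; apply: eq_bigr => j _ /=; ring.
Qed.

Lemma qpolar_delta i y : qpolar (delta_mx 0 i) y = qgrad y 0 i.
Proof.
rewrite qpolarE (bigD1 i) //= mxE !eqxx mul1r big1 ?addr0 // => k /negbTE k_neq_i.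
by rewrite mxE k_neq_i andbF mul0r.
Qed.

Lemma qpolarxx x : qpolar x x = 2 * qform A x.
Proof.
rewrite /qpolar /qform mulr_sumr; apply: eq_bigr => i _.
by rewrite mulr_sumr; apply: eq_bigr => j _; ring.
Qed.

Lemma qform_line x h t :
  qform A (x + t *: h) = qform A x + t * qpolar x h + t ^+ 2 * qform A h.
Proof.
rewrite /qform /qpolar !mulr_sumr -!big_split; apply: eq_bigr => i _ /=.
rewrite !mulr_sumr -!big_split; apply: eq_bigr => j _ /=.
by rewrite !mxE; ring.
Qed.

Lemma qgradN h : qgrad (- h) = - qgrad h.
Proof.
apply/rowP => i; rewrite !mxE -sumrN.
by apply: eq_bigr => j _; rewrite mxE mulrN.
Qed.

Lemma partial_qform i h : partial (qform A) i h = qgrad h 0 i.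
Proof.
by apply: derive_quadratic_line => t; rewrite qform_line qpolarC qpolar_delta.
Qed.

Lemma P_faithful_qgrad_not_ge0 h : P_faithful (qform A) -> Hn h -> h <> 0 ->
  ~ (forall i, 0 <= qgrad h 0 i).
Proof.
move=> qP h_sum h_neq0 grad_ge0; have [[x [Px [x_min _]]] min_int] := qP.
have x_int := min_int x Px x_min; have [x_gt0 _] := x_int.
have slope0 := interior_min_slope_eq0 x_int x_min h_sum (qform_line x h).
have grad0 i : qgrad h 0 i = 0.
  have weighted_ge0 k : 0 <= x 0 k * qgrad h 0 k.
    by apply: mulr_ge0; [exact: ltW | exact: grad_ge0].
  rewrite qpolarE in slope0.
  have /eqP := @psumr_eq0P _ _ _ _ (fun k _ => weighted_ge0 k) slope0 i isT.
  by rewrite mulf_eq0 (gt_eqF (x_gt0 i)) => /eqP.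
have qh0 : qform A h = 0.
  have /eqP := qpolarxx h; rewrite qpolarE big1 => [|i _]; last by rewrite grad0 mulr0.
  by rewrite eq_sym mulf_eq0 pnatr_eq0 /= => /eqP.
apply: (P_faithful_line_nonconst qP Px x_min h_sum h_neq0) => t.
by rewrite qform_line slope0 qh0 !mulr0 !addr0.
Qed.

End QuadraticForm.

Theorem corollary2 (R : realType) (n : nat) (A : 'M[R]_n) :
  P_faithful (qform A) -> antimonotonous (qform A).
Proof.
move=> qP h [h_sum [h_neq0 [grad_le0|grad_ge0]]].
- apply: (P_faithful_qgrad_not_ge0 qP (HnN h_sum)).
  + by move=> /eqP; rewrite oppr_eq0 => /eqP.
  + by move=> i; rewrite qgradN mxE oppr_ge0 -partial_qform.
- by apply: (P_faithful_qgrad_not_ge0 qP h_sum h_neq0) => i; rewrite -partial_qform.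
Qed.
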